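(* Let $M,n,d\in\mathbb{N}$ and let ${\bm{x}}_i^m\in\mathbb{R}^d$ ($m\in[M]$, $i\in[n]$) satisfy $\|{\bm{x}}_i^m\|\le 1$, and assume the data are linearly separable, i.e. there is ${\bm{w}}$ with $\langle {\bm{w}},{\bm{x}}_i^m\rangle>0$ for all $m,i$. Let $\gamma=\max_{\|{\bm{w}}\|=1}\min_{m,i}\langle {\bm{w}},{\bm{x}}_i^m\rangle>0$. Let $\ell(z)=\log(1+e^{-z})$, $F_m({\bm{w}})=\frac1n\sum_{i=1}^n\ell(\langle {\bm{w}},{\bm{x}}_i^m\rangle)$, $F=\frac1M\sum_{m=1}^M F_m$. Run Local GD with arbitrary initialization ${\bm{w}}_0\in\mathbb{R}^d$, any stepsize $\eta>0$ and any number of local steps $K\in\mathbb{N}$: for each round $r\ge 0$ and each $m\in[M]$, set ${\bm{w}}_{r,0}^m={\bm{w}}_r$, ${\bm{w}}_{r,k+1}^m={\bm{w}}_{r,k}^m-\eta\nabla F_m({\bm{w}}_{r,k}^m)$ for $k=0,\dots,K-1$, and ${\bm{w}}_{r+1}=\frac1M\sum_{m=1}^M{\bm{w}}_{r,K}^m$. Then for every integer $r\ge 1$, $$\frac1r\sum_{s=0}^{r-1}F({\bm{w}}_s)\le 26\,\frac{\|{\bm{w}}_0\|^2+1+\log^2(K+\eta K\gamma^2 r)+\eta^2K^2}{\eta\gamma^4 r}.$$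
   Context: This is a distributed logistic regression problem where labels have been absorbed into the data (each data point is ${\bm{x}}_i^m$ with label $+1$). $\|\cdot\|$ is the Euclidean norm. *)

From HB Require Import structures.
From mathcomp Require Import all_boot all_order all_algebra.
From mathcomp Require Import all_classical all_reals all_analysis.
Set Implicit Arguments. Unset Strict Implicit. Unset Printing Implicit Defensive.
Import Order.TTheory GRing.Theory Num.Theory.
Import numFieldNormedType.Exports.
Local Open Scope ring_scope.

Section Defs.
Variable R : realType.

Definition dotp (d : nat) (u v : 'rV[R]_d) : R := \sum_(j < d) u 0 j * v 0 j.
Definition enorm (d : nat) (u : 'rV[R]_d) : R := Num.sqrt (dotp u u).

Definition logistic (z : R) : R := ln (1 + expR (- z)).

Definition Floc (M n d : nat) (x : 'I_M -> 'I_n -> 'rV[R]_d) (m : 'I_M)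
  (w : 'rV[R]_d) : R := n%:R^-1 * \sum_(i < n) logistic (dotp w (x m i)).

Definition Fglob (M n d : nat) (x : 'I_M -> 'I_n -> 'rV[R]_d)
  (w : 'rV[R]_d) : R := M%:R^-1 * \sum_(m < M) Floc x m w.

Definition ebasis (d : nat) (j : 'I_d) : 'rV[R]_d := \row_k (if k == j then 1 else 0).

Definition grad (d : nat) (f : 'rV[R]_d -> R) (w : 'rV[R]_d) : 'rV[R]_d :=
  \row_j ('D_(ebasis j) f w).

Definition local_run (M n d : nat) (x : 'I_M -> 'I_n -> 'rV[R]_d) (eta : R)
  (K : nat) (m : 'I_M) (w : 'rV[R]_d) : 'rV[R]_d :=
  iter K (fun v => v - eta *: grad (Floc x m) v) w.

Fixpoint localGD (M n d : nat) (x : 'I_M -> 'I_n -> 'rV[R]_d) (eta : R)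
  (K : nat) (w0 : 'rV[R]_d) (r : nat) : 'rV[R]_d :=
  match r with
  | 0%N => w0
  | r'.+1 => M%:R^-1 *: \sum_(m < M) local_run x eta K m (localGD x eta K w0 r')
  end.

Definition is_max_margin (M n d : nat) (x : 'I_M -> 'I_n -> 'rV[R]_d) (gamma : R) : Prop :=
  (exists w : 'rV[R]_d, enorm w = 1 /\
      (forall m i, gamma <= dotp w (x m i)) /\ (exists m i, dotp w (x m i) = gamma)) /\
  (forall w : 'rV[R]_d, enorm w = 1 -> exists m i, dotp w (x m i) <= gamma).

End Defs.

From HB Require Import structures.
From mathcomp Require Import all_boot all_order all_algebra.
From mathcomp Require Import all_classical all_reals all_analysis.
From mathcomp Require Import ring lra.
Set Implicit Arguments. Unset Strict Implicit. Unset Printing Implicit Defensive.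
Import Order.TTheory GRing.Theory Num.Theory.
Import numFieldNormedType.Exports.
Local Open Scope ring_scope.

(* Fix a unit direction [ws] attaining the margin [gamma] and compare the iterates with
   [u = u1 + eta / (2 gamma) ws], where [u1 = (L / gamma) ws].  For the logistic loss the
   squared norm of the gradient of [F_m] at [v] is at most the weight
   [1/n sum_i sigma(- <v, x_i>)], while the descent direction has inner product at least
   [gamma] times that weight with [ws].  Hence the shift of the comparator along [ws] cancels
   the second-order term of a gradient step, and convexity gives
   [|v' - u|^2 <= |v - u|^2 - 2 eta F_m(v) + 2 eta F_m(u1)].  Chaining the [K] local steps,
   averaging over clients (Jensen) and telescoping over rounds bounds
   [eta sum_(s < r) F(w_s)] by [|w0 - u|^2 / 2 + eta K r F(u1)]; every margin of [u1] is at
   least [L], so [F(u1) <= e^(-L)], and [L = ln (K + eta K gamma^2 r)] balances the terms. *)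

Section Dotp.
Variables (R : realType) (d : nat).
Implicit Types (u v w : 'rV[R]_d) (a : R).

Lemma dotpC u v : dotp u v = dotp v u.
Proof. by apply: eq_bigr => j _; rewrite mulrC. Qed.

Lemma dotpDl u v w : dotp (u + v) w = dotp u w + dotp v w.
Proof. by rewrite /dotp -big_split; apply: eq_bigr => j _; rewrite mxE mulrDl. Qed.

Lemma dotpZl a u v : dotp (a *: u) v = a * dotp u v.
Proof. by rewrite /dotp mulr_sumr; apply: eq_bigr => j _; rewrite mxE mulrA. Qed.

Lemma dotpNl u v : dotp (- u) v = - dotp u v.
Proof. by rewrite -scaleN1r dotpZl mulN1r. Qed.

Lemma dotpBl u v w : dotp (u - v) w = dotp u w - dotp v w.
Proof. by rewrite dotpDl dotpNl. Qed.

Lemma dotpDr u v w : dotp u (v + w) = dotp u v + dotp u w.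
Proof. by rewrite dotpC dotpDl !(dotpC u). Qed.

Lemma dotpZr a u v : dotp u (a *: v) = a * dotp u v.
Proof. by rewrite dotpC dotpZl dotpC. Qed.

Lemma dotpBr u v w : dotp u (v - w) = dotp u v - dotp u w.
Proof. by rewrite dotpC dotpBl !(dotpC u). Qed.

Lemma dotp_suml (I : Type) (s : seq I) (f : I -> 'rV[R]_d) v :
  dotp (\sum_(i <- s) f i) v = \sum_(i <- s) dotp (f i) v.
Proof.
elim: s => [|a s IH]; last by rewrite !big_cons dotpDl IH.
by rewrite !big_nil /dotp big1 // => j _; rewrite mxE mul0r.
Qed.

Lemma dotpp_ge0 u : 0 <= dotp u u.
Proof. by apply: sumr_ge0 => j _; rewrite -expr2 sqr_ge0. Qed.

Lemma enorm_sqr u : enorm u ^+ 2 = dotp u u.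
Proof. by rewrite sqr_sqrtr // dotpp_ge0. Qed.

Lemma dotpp_le1 u : enorm u <= 1 -> dotp u u <= 1.
Proof. by move=> u1; rewrite -enorm_sqr expr_le1 // sqrtr_ge0. Qed.

Lemma dotp_le1 u v : dotp u u = 1 -> dotp v v <= 1 -> dotp u v <= 1.
Proof. by move=> uu vv; have := dotpp_ge0 (u - v); rewrite !dotpBl !dotpBr (dotpC v u); lra. Qed.

Lemma dotppD u v : dotp (u + v) (u + v) = dotp u u + 2 * dotp u v + dotp v v.
Proof. by rewrite dotpDl !dotpDr (dotpC v u); ring. Qed.

Lemma dotpp_subr_le u v : dotp (u - v) (u - v) <= 2 * dotp u u + 2 * dotp v v.
Proof. by have := dotpp_ge0 (u + v); rewrite !dotpBl !dotpBr !dotpDl !dotpDr (dotpC v u); lra. Qed.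

Lemma dotpp_mean_le (N : nat) (f : 'I_N -> 'rV[R]_d) :
  (0 < N)%N ->
  dotp (N%:R^-1 *: \sum_(i < N) f i) (N%:R^-1 *: \sum_(i < N) f i)
  <= N%:R^-1 * \sum_(i < N) dotp (f i) (f i).
Proof.
move=> N0; set mu := N%:R^-1 *: _.
have N0' : N%:R != 0 :> R by rewrite pnatr_eq0 -lt0n.
have sum_mu : \sum_(i < N) f i = N%:R *: mu by rewrite scalerA divff // scale1r.
have spread : \sum_(i < N) dotp (f i - mu) (f i - mu)
              = \sum_(i < N) dotp (f i) (f i) - N%:R * dotp mu mu.
  rewrite (eq_bigr (fun i => dotp (f i) (f i) - 2 * dotp (f i) mu + dotp mu mu)); last first.
    by move=> i _; rewrite !dotpBl !dotpBr (dotpC mu); ring.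
  rewrite !big_split /= sumrN sumr_const card_ord -mulr_sumr -dotp_suml sum_mu dotpZl.
  by rewrite -mulr_natl; ring.
have : 0 <= \sum_(i < N) dotp (f i - mu) (f i - mu) by apply: sumr_ge0 => i _; exact: dotpp_ge0.
rewrite spread subr_ge0 => le; rewrite ler_pdivlMl ?ltr0n //.
Qed.

End Dotp.

Lemma mean_le (R : realType) (N : nat) (a : 'I_N -> R) (B : R) :
  (0 < N)%N -> (forall i, a i <= B) -> N%:R^-1 * \sum_(i < N) a i <= B.
Proof.
move=> N0 aB; rewrite ler_pdivrMl ?ltr0n //.
have -> : N%:R * B = \sum_(i < N) B by rewrite sumr_const card_ord mulr_natl.
exact: ler_sum.
Qed.

Section Logistic.
Variable R : realType.
Implicit Types (a b z : R).

Definition sigmoidN z : R := (1 + expR z)^-1.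

Lemma sigmoidN_gt0 z : 0 < sigmoidN z.
Proof. by rewrite invr_gt0 addr_gt0 // expR_gt0. Qed.

Lemma sigmoidN_le1 z : sigmoidN z <= 1.
Proof. by rewrite invf_le1 ?addr_gt0 ?expR_gt0 // lerDl expR_ge0. Qed.

Lemma logistic_ge0 z : 0 <= logistic z.
Proof. by rewrite ln_ge0 // lerDl expR_ge0. Qed.

Lemma logistic_le_expRN z : logistic z <= expR (- z).
Proof. by rewrite le_ln1Dx // (lt_le_trans _ (expR_ge0 _)) // ltrN10. Qed.

Lemma is_derive_logistic z : is_derive z 1 (@logistic R) (- sigmoidN z).
Proof.
have pos : 0 < 1 + expR (- z) by rewrite addr_gt0 // expR_gt0.
have inner : is_derive z 1 (fun t : R => 1 + expR (- t)) (expR (- z) * (-1)).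
  have := is_deriveD (is_derive_cst (1 : R) z 1)
            (is_derive1_comp (is_derive_expR (- z)) (is_deriveNid z 1)).
  by rewrite add0r.
have -> : @logistic R = (@ln R) \o (fun t => 1 + expR (- t)) by [].
apply: (is_derive_eq
  (@is_derive1_comp _ _ (fun t => 1 + expR (- t)) _ _ _ (is_derive1_ln pos) inner)).
have ez : expR z != 0 by rewrite gt_eqF // expR_gt0.
have ez1 : 1 + expR z != 0 by rewrite gt_eqF // addr_gt0 // expR_gt0.
by rewrite /sigmoidN expRN; field; rewrite ez ez1.
Qed.

Lemma expR_mul_le_mix (p t : R) : 0 <= p <= 1 -> expR (p * t) <= 1 - p + p * expR t.
Proof.
case/andP => p0 p1; have q0 : 0 <= 1 - p by rewrite subr_ge0.
have lo : (1 - p) * (1 - p * t) <= (1 - p) * expR (- (p * t)).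
  by rewrite ler_wpM2l // expR_ge1Dx.
have hi : p * (1 + (1 - p) * t) <= p * expR ((1 - p) * t).
  by rewrite ler_wpM2l // expR_ge1Dx.
have -> : 1 - p + p * expR t
          = expR (p * t) * ((1 - p) * expR (- (p * t)) + p * expR ((1 - p) * t)).
  rewrite mulrDr mulrCA -expRD subrr expR0 mulr1 mulrCA -expRD.
  by congr (_ + _ * expR _); ring.
rewrite ler_peMr ?expR_ge0 //.
have mix : (1 - p) * (1 - p * t) + p * (1 + (1 - p) * t) = 1 by ring.
by rewrite -[X in X <= _]mix lerD.
Qed.

Lemma logistic_tangent_le a b : logistic a + sigmoidN a * (a - b) <= logistic b.
Proof.
have A0 : 0 < 1 + expR (- a) by rewrite addr_gt0 // expR_gt0.
have B0 : 0 < 1 + expR (- b) by rewrite addr_gt0 // expR_gt0.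
rewrite /logistic -[sigmoidN a * _]expRK -lnM ?posrE ?expR_gt0 //.
rewrite ler_ln ?posrE ?mulr_gt0 ?expR_gt0 //.
set p := sigmoidN a.
have p01 : 0 <= p <= 1 by rewrite ltW ?sigmoidN_gt0 ?sigmoidN_le1.
have -> : 1 + expR (- b) = (1 + expR (- a)) * (1 - p + p * expR (a - b)).
  have ea1 : 1 + expR a != 0 by rewrite gt_eqF // addr_gt0 // expR_gt0.
  have ea : expR a != 0 by rewrite gt_eqF // expR_gt0.
  have eb : expR b != 0 by rewrite gt_eqF // expR_gt0.
  by rewrite /p /sigmoidN expRD !expRN; field; rewrite ea1 ea eb.
by apply: ler_wpM2l; [exact: ltW | exact: expR_mul_le_mix].
Qed.

End Logistic.

Section Gradient.
Variables (R : realType) (d : nat).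

Lemma derive_along (f : 'rV[R]_d -> R) (e v : 'rV[R]_d) :
  'D_e f v = 'D_1 (fun h : R => f (h *: e + v)) 0.
Proof.
rewrite /derive; set lhs := fun h => h^-1 *: _; set rhs := fun h => h^-1 *: _.
suff -> : lhs = rhs by [].
by apply/funext => h; rewrite /lhs /rhs /= scale0r add0r addr0 [_%:A]mulr1.
Qed.

Lemma dotp_ebasis (j : 'I_d) (y : 'rV[R]_d) : dotp (ebasis R j) y = y 0 j.
Proof.
rewrite /dotp (bigD1 j) //= !mxE eqxx mul1r big1 ?addr0 // => k /negbTE kj.
by rewrite mxE kj mul0r.
Qed.

Lemma is_derive_line (t c z : R) : is_derive t 1 (fun h : R => h * c + z) c.
Proof.
have -> : (fun h : R => h * c + z) = c \*: (@id R) + cst z.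
  by apply/funext => h /=; rewrite mulrC.
have := is_deriveD (is_deriveZ c (is_derive_id t 1)) (is_derive_cst z t 1).
by rewrite scaler1 addr0.
Qed.

End Gradient.

Section Client.
Variables (R : realType) (M n d : nat) (x : 'I_M -> 'I_n -> 'rV[R]_d) (m : 'I_M).
Implicit Types (v : 'rV[R]_d).

Definition Floc_ngrad v : 'rV[R]_d :=
  n%:R^-1 *: \sum_(i < n) sigmoidN (dotp v (x m i)) *: x m i.

Definition Floc_weight v : R := n%:R^-1 * \sum_(i < n) sigmoidN (dotp v (x m i)).

Lemma grad_Floc v : grad (Floc x m) v = - Floc_ngrad v.
Proof.
apply/rowP => j; rewrite !mxE summxE derive_along -mulrN -sumrN.
have -> : (fun h : R => Floc x m (h *: ebasis R j + v)) =
    n%:R^-1 \*: \sum_(i < n) (fun h : R => logistic (h * x m i 0 j + dotp v (x m i))).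
  apply/funext => h; rewrite /Floc /= fct_sumE; congr (_ * _).
  by apply: eq_bigr => i _; rewrite dotpDl dotpZl dotp_ebasis.
apply: derive_val; apply: is_deriveZ; apply: is_derive_sum => i.
rewrite mxE -mulNr.
have := is_derive1_comp (is_derive_logistic _) (is_derive_line 0 (x m i 0 j) (dotp v (x m i))).
by rewrite mul0r add0r.
Qed.

End Client.

Section LocalGD.
Variables (R : realType) (M n d : nat) (x : 'I_M -> 'I_n -> 'rV[R]_d).
Variables (gamma eta : R) (K : nat) (ws : 'rV[R]_d).
Hypothesis M_gt0 : (0 < M)%N.
Hypothesis n_gt0 : (0 < n)%N.
Hypothesis x_le1 : forall m i, dotp (x m i) (x m i) <= 1.
Hypothesis ws_margin : forall m i, gamma <= dotp ws (x m i).
Hypothesis gamma_gt0 : 0 < gamma.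
Hypothesis eta_gt0 : 0 < eta.
Hypothesis K_gt0 : (0 < K)%N.

Lemma Floc_ge0 m v : 0 <= Floc x m v.
Proof. by rewrite mulr_ge0 ?invr_ge0 // sumr_ge0 // => i _; exact: logistic_ge0. Qed.

Lemma Floc_weight_ge0 m v : 0 <= Floc_weight x m v.
Proof. by rewrite mulr_ge0 ?invr_ge0 // sumr_ge0 // => i _; rewrite ltW ?sigmoidN_gt0. Qed.

Lemma Floc_ngrad_sqr_le m v :
  dotp (Floc_ngrad x m v) (Floc_ngrad x m v) <= Floc_weight x m v.
Proof.
apply: le_trans (dotpp_mean_le _ n_gt0) _; rewrite ler_wpM2l ?invr_ge0 //.
apply: ler_sum => i _; rewrite dotpZl dotpZr.
have s0 := sigmoidN_gt0 (dotp v (x m i)).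
apply: ler_piMr (ltW s0) _.
exact: mulr_ile1 (ltW s0) (dotpp_ge0 _) (sigmoidN_le1 _) (x_le1 m i).
Qed.

Lemma Floc_ngrad_margin m v : gamma * Floc_weight x m v <= dotp (Floc_ngrad x m v) ws.
Proof.
rewrite dotpZl mulrCA ler_wpM2l ?invr_ge0 // dotp_suml mulr_sumr.
apply: ler_sum => i _; rewrite dotpZl (dotpC (x m i)) mulrC.
by apply: ler_wpM2l; [apply/ltW/sigmoidN_gt0 | apply: ws_margin].
Qed.

Lemma Floc_tangent_le m u v : Floc x m v + dotp (Floc_ngrad x m v) (v - u) <= Floc x m u.
Proof.
rewrite dotpZl -mulrDr ler_wpM2l ?invr_ge0 // dotp_suml -big_split /=.
apply: ler_sum => i _; rewrite dotpZl dotpBr !(dotpC (x m i)).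
exact: logistic_tangent_le.
Qed.

Section Comparator.
Variables (u1 u : 'rV[R]_d).
Hypothesis u_def : u = u1 + (eta / (2 * gamma)) *: ws.

Lemma Floc_step_dist_le m v :
  dotp (v - eta *: grad (Floc x m) v - u) (v - eta *: grad (Floc x m) v - u)
  <= dotp (v - u) (v - u) - 2 * eta * Floc x m v + 2 * eta * Floc x m u1.
Proof.
rewrite grad_Floc scalerN opprK (addrAC v).
have tangent := Floc_tangent_le m u1 v.
have margin := Floc_ngrad_margin m v.
have sqr := Floc_ngrad_sqr_le m v.
have W0 := Floc_weight_ge0 m v.
move: (Floc_ngrad x m v) (Floc_weight x m v) tangent margin sqr W0 => g W tangent margin sqr W0.
have e0 := ltW eta_gt0.
set c := eta / (2 * gamma).
have c0 : 0 <= c by rewrite /c divr_ge0 // mulr_ge0 // ltW.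
have k1 : eta * dotp g (v - u1) <= eta * (Floc x m u1 - Floc x m v).
  by rewrite ler_wpM2l //; lra.
have k2 : eta * eta * W <= 2 * eta * c * dotp g ws.
  have <- : 2 * eta * c * (gamma * W) = eta * eta * W by rewrite /c; field; rewrite gt_eqF.
  by rewrite ler_wpM2l // mulr_ge0 // mulr_ge0.
have k3 : eta * eta * dotp g g <= eta * eta * W by rewrite ler_wpM2l // mulr_ge0.
have split_u : dotp g (v - u) = dotp g (v - u1) - c * dotp g ws.
  by rewrite u_def opprD addrA [LHS]dotpBr dotpZr.
rewrite [leLHS]dotppD !dotpZl !dotpZr (dotpC _ g) split_u.
clearbody c; lra.
Qed.

Lemma iter_step_dist_le m k v :
  dotp (iter k (fun w => w - eta *: grad (Floc x m) w) v - u)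
       (iter k (fun w => w - eta *: grad (Floc x m) w) v - u)
  <= dotp (v - u) (v - u) + 2 * eta * k%:R * Floc x m u1.
Proof.
elim: k => [|k IH] /=; first by rewrite mulr0 mul0r addr0.
set w := iter k _ v in IH *.
have := Floc_step_dist_le m w.
have := mulr_ge0 (ltW eta_gt0) (Floc_ge0 m w).
rewrite -[k.+1]addn1 natrD; lra.
Qed.

Lemma local_run_dist_le m w :
  dotp (local_run x eta K m w - u) (local_run x eta K m w - u)
  <= dotp (w - u) (w - u) - 2 * eta * Floc x m w + 2 * eta * K%:R * Floc x m u1.
Proof.
case: K K_gt0 => [|k] // _; rewrite /local_run iterSr.
apply: le_trans (iter_step_dist_le _ _ _) _.
have := Floc_step_dist_le m w; rewrite -[k.+1]addn1 natrD; lra.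
Qed.

Lemma localGD_step_dist_le w :
  dotp (M%:R^-1 *: \sum_(m < M) local_run x eta K m w - u)
       (M%:R^-1 *: \sum_(m < M) local_run x eta K m w - u)
  <= dotp (w - u) (w - u) - 2 * eta * Fglob x w + 2 * eta * K%:R * Fglob x u1.
Proof.
have M0 : M%:R != 0 :> R by rewrite pnatr_eq0 -lt0n.
have -> : M%:R^-1 *: \sum_(m < M) local_run x eta K m w - u
          = M%:R^-1 *: \sum_(m < M) (local_run x eta K m w - u).
  by rewrite sumrB sumr_const card_ord scalerBr -[u *+ M]scaler_nat scalerA mulVf // scale1r.
apply: le_trans (dotpp_mean_le _ M_gt0) _.
apply: le_trans (ler_wpM2l _ (ler_sum _ (fun m _ => local_run_dist_le m w))) _.
  by rewrite invr_ge0.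
rewrite /Fglob !big_split /= sumrN sumr_const card_ord.
rewrite -(mulr_sumr _ _ _ (2 * eta)) -(mulr_sumr _ _ _ (2 * eta * K%:R)) -mulr_natr.
by rewrite le_eqVlt; apply/orP; left; apply/eqP; field.
Qed.

Lemma localGD_dist_le w0 r :
  dotp (localGD x eta K w0 r - u) (localGD x eta K w0 r - u)
  <= dotp (w0 - u) (w0 - u) - 2 * eta * \sum_(s < r) Fglob x (localGD x eta K w0 s)
     + 2 * eta * K%:R * r%:R * Fglob x u1.
Proof.
elim: r => [|r IH]; first by rewrite big_ord0 !mulr0 mul0r subr0 addr0.
have := localGD_step_dist_le (localGD x eta K w0 r).
rewrite /= big_ord_recr /= -[r.+1]addn1 natrD; lra.
Qed.

End Comparator.

Lemma Fglob_scale_le t : 0 <= t -> Fglob x (t *: ws) <= expR (- (t * gamma)).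
Proof.
move=> t0; apply: mean_le => // m; apply: mean_le => // i.
apply: le_trans (logistic_le_expRN _) _.
by rewrite ler_expR lerN2 dotpZl ler_wpM2l.
Qed.

Lemma localGD_loss_sum_le w0 t r : dotp ws ws = 1 -> 0 <= t ->
  eta * \sum_(s < r) Fglob x (localGD x eta K w0 s)
  <= dotp w0 w0 + (t + eta / (2 * gamma)) ^+ 2 + eta * K%:R * r%:R * expR (- (t * gamma)).
Proof.
move=> ws1 t0; set u := (t + eta / (2 * gamma)) *: ws.
have dist := localGD_dist_le (scalerDl ws t (eta / (2 * gamma))) w0 r.
have := dotpp_ge0 (localGD x eta K w0 r - u).
have := dotpp_subr_le w0 u; rewrite /u dotpZl dotpZr ws1 mulr1 -expr2.
have : eta * K%:R * r%:R * Fglob x (t *: ws) <= eta * K%:R * r%:R * expR (- (t * gamma)).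
  by rewrite ler_wpM2l ?Fglob_scale_le // !mulr_ge0 // ltW.
lra.
Qed.

End LocalGD.

Section RateArith.
Variable R : realType.

Lemma rate_arith (A S L eta gamma K r : R) :
  0 <= A -> 0 < gamma <= 1 -> 0 < eta -> 1 <= K -> 1 <= r ->
  expR L = K + eta * K * gamma ^+ 2 * r ->
  eta * S <= A + (L / gamma + eta / (2 * gamma)) ^+ 2 + eta * K * r * expR (- L) ->
  r^-1 * S <= 26 * (A + 1 + L ^+ 2 + eta ^+ 2 * K ^+ 2) / (eta * gamma ^+ 4 * r).
Proof.
move=> A0 /andP[g0 g1] e0 K1 r1 expL hS.
have r0 : 0 < r by exact: lt_le_trans r1.
rewrite ler_pdivlMr ?mulr_gt0 ?exprn_gt0 //.
have -> : r^-1 * S * (eta * gamma ^+ 4 * r) = gamma ^+ 4 * (eta * S).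
  by field; rewrite gt_eqF.
set E := expR (- L); set g2 := gamma ^+ 2.
set Q := (L / gamma + eta / (2 * gamma)) ^+ 2 in hS; set W := eta * K * r * E in hS.
have g20 : 0 < g2 by rewrite exprn_gt0.
have g21 : g2 <= 1 by rewrite expr_le1 // ltW.
have hS4 : g2 * g2 * (eta * S) <= g2 * g2 * A + g2 * g2 * Q + g2 * g2 * W.
  by rewrite -!mulrDr ler_wpM2l // mulr_ge0 // ltW.
have A4 : g2 * g2 * A <= A by exact: ler_piMl A0 (mulr_ile1 (ltW g20) (ltW g20) g21 g21).
have Q4 : g2 * g2 * Q <= 2 * L ^+ 2 + eta ^+ 2 / 2.
  have -> : g2 * g2 * Q = g2 * (L + eta / 2) ^+ 2 by rewrite /Q /g2; field; rewrite gt_eqF.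
  apply: le_trans (ler_piMl (sqr_ge0 _) g21) _.
  by have := sqr_ge0 (L - eta / 2); rewrite !expr2; lra.
have W4 : g2 * g2 * W <= 1.
  have EZ : E * K + W * g2 = 1.
    by rewrite /W -[1](expR0 R) -(addNr L) expRD expL -/E /g2; ring.
  have E0 : 0 <= E := expR_ge0 _.
  have K0 : 0 <= K := le_trans ler01 K1.
  have EK : 0 <= E * K by rewrite mulr_ge0.
  have W0 : 0 <= W * g2 by rewrite /W !mulr_ge0 // ?ltW.
  have := ler_piMl W0 g21; lra.
have eK : eta ^+ 2 <= eta ^+ 2 * K ^+ 2.
  by rewrite ler_peMr ?sqr_ge0 // expr_ge1 // (le_trans ler01).
have -> : gamma ^+ 4 = g2 * g2 by rewrite -exprD.
have := sqr_ge0 L; have := sqr_ge0 eta; lra.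
Qed.

End RateArith.

Theorem theorem4p1 (R : realType) (M n d : nat) (x : 'I_M -> 'I_n -> 'rV[R]_d)
  (gamma eta : R) (K : nat) (w0 : 'rV[R]_d) :
  (0 < M)%N -> (0 < n)%N ->
  (forall m i, enorm (x m i) <= 1) ->
  (exists w : 'rV[R]_d, forall m i, 0 < dotp w (x m i)) ->
  is_max_margin x gamma -> 0 < gamma ->
  0 < eta -> (1 <= K)%N ->
  forall r : nat, (1 <= r)%N ->
    r%:R^-1 * \sum_(s < r) Fglob x (localGD x eta K w0 s)
    <= 26 * ((enorm w0) ^+ 2 + 1
             + (ln (K%:R + eta * K%:R * gamma ^+ 2 * r%:R)) ^+ 2
             + eta ^+ 2 * K%:R ^+ 2)
          / (eta * gamma ^+ 4 * r%:R).
Proof.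
move=> M0 n0 x_le1 _ [[ws [ws_unit [margin _]]] _] g0 e0 K1 r r1.
have K1' : 1 <= K%:R :> R by rewrite ler1n.
have r1' : 1 <= r%:R :> R by rewrite ler1n.
have x_le1' m i : dotp (x m i) (x m i) <= 1 := dotpp_le1 (x_le1 m i).
have ws1 : dotp ws ws = 1 by rewrite -enorm_sqr ws_unit expr1n.
have g1 : gamma <= 1.
  exact: le_trans (margin (Ordinal M0) (Ordinal n0)) (dotp_le1 ws1 (x_le1' _ _)).
set Z := K%:R + eta * K%:R * gamma ^+ 2 * r%:R.
have Z1 : 1 <= Z.
  have := mulr_ge0 (mulr_ge0 (mulr_ge0 (ltW e0) (ler0n R K)) (sqr_ge0 gamma)) (ler0n R r).
  rewrite /Z; lra.
have := localGD_loss_sum_le M0 n0 x_le1' margin g0 e0 K1 w0 r ws1 (divr_ge0 (ln_ge0 Z1) (ltW g0)).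
rewrite divfK ?gt_eqF // -enorm_sqr => bound.
apply: rate_arith bound; rewrite ?sqr_ge0 ?g0 ?g1 ?lnK ?posrE //.
exact: lt_le_trans ltr01 Z1.
Qed.
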